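(* Let $S_j$, $j\in\mathbb{Z}^d$, be local potentials satisfying (A)–(E). Let $(p_1,q_1),\dots,(p_d,q_d)\in\mathbb{Z}^d\times\mathbb{Z}$ be such that $p_1,\dots,p_d$ are linearly independent. Then the periodic action $W_{p,q}:\mathbb{X}_{p,q}\to\mathbb{R}$ attains its minimum on $\mathbb{X}_{p,q}$.
   Context: Notation: $\|i\|=\sum_{k=1}^d|i_k|$ for $i\in\mathbb{Z}^d$, $B_j^r=\{k\in\mathbb{Z}^d:\|k-j\|\le r\}$, and $(\tau_{k,l}x)_i=x_{i+k}+l$ for $(k,l)\in\mathbb{Z}^d\times\mathbb{Z}$, $x\in\mathbb{R}^{\mathbb{Z}^d}$. Local potentials are functions $S_j:\mathbb{R}^{\mathbb{Z}^d}\to\mathbb{R}$, $j\in\mathbb{Z}^d$, with: (A) there is $r\in(0,\infty)$ and $C^2$ functions $s_j:\mathbb{R}^{B_j^r}\to\mathbb{R}$ with $S_j(x)=s_j(x|_{B_j^r})$ (partial derivatives $\partial_{i_1\dots i_m}S_j$ are those of $s_j$, and zero if some index lies outside $B_j^r$); (B) $S_j(\tau_{k,l}x)=S_{j+k}(x)$ for all $j,k,l$; (C) each $S_j$ is bounded below and $S_j(x)\to\infty$ as $|x_k-x_j|\to\infty$ for every $k$ with $\|k-j\|=1$; (D) $\partial_{i,k}S_j\le 0$ for all $j$ and $i\ne k$, and $\partial_{i,k}S_i<0$ whenever $\|i-k\|=1$; (E) there is $C$ with $|\partial_{i,k}S_j|\le C$ for all $i,j,k$. Let $p$ denote the $d\times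 d$ integer matrix with columns $p_1,\dots,p_d$, $B_p=p([0,1)^d)\cap\mathbb{Z}^d$, $\mathbb{X}_{p,q}=\{x\in\mathbb{R}^{\mathbb{Z}^d}:\tau_{p_j,q_j}x=x,\ j=1,\dots,d\}$, and $W_{p,q}(x)=\sum_{j\in B_p}S_j(x)$ for $x\in\mathbb{X}_{p,q}$. A minimizer of $W_{p,q}$ on $\mathbb{X}_{p,q}$ is called a $p,q$-minimizer. *)

From mathcomp Require Import ssreflect ssrfun ssrbool eqtype ssrnat seq choice fintype finfun bigop.
From Stdlib Require Import Reals ZArith ClassicalEpsilon.

Set Implicit Arguments.
Unset Strict Implicit.
Unset Printing Implicit Defensive.

Definition point (d : nat) := 'I_d -> Z.
Definition config (d : nat) := point d -> R.

Definition padd {d} (i k : point d) : point d := fun m => (i m + k m)%Z.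
Definition psub {d} (i k : point d) : point d := fun m => (i m - k m)%Z.

Definition pt_eqb {d} (i k : point d) : bool := [forall m : 'I_d, Z.eqb (i m) (k m)].

Definition pnorm {d} (i : point d) : Z := (\big[Z.add/0%Z]_(m < d) Z.abs (i m))%Z.

Definition inBall {d} (j : point d) (r : R) (k : point d) : Prop :=
  (IZR (pnorm (psub k j)) <= r)%R.

Definition tau {d} (k : point d) (l : Z) (x : config d) : config d :=
  fun i => (x (padd i k) + IZR l)%R.

Definition upd {d} (x : config d) (i : point d) (t : R) : config d :=
  fun k => if pt_eqb k i then t else x k.

Definition cont_in {d} (B : point d -> Prop) (f : config d -> R) : Prop :=
  forall (x : config d) (eps : R), (0 < eps)%R ->
    exists delta : R, (0 < delta)%R /\
      forall y : config d, (forall k, B k -> (Rabs (y k - x k) < delta)%R) ->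
        (Rabs (f y - f x) < eps)%R.

Definition is_partial {d} (f : config d -> R) (i : point d) (x : config d) (l : R) : Prop :=
  derivable_pt_lim (fun t => f (upd x i t)) (x i) l.

Definition is_partial2 {d} (f : config d -> R) (i k : point d) (x : config d) (l : R) : Prop :=
  exists g : config d -> R, (forall y, is_partial f k y (g y)) /\ is_partial g i x l.

Definition C2_in {d} (B : point d -> Prop) (f : config d -> R) : Prop :=
  cont_in B f /\
  exists (D1 : point d -> config d -> R) (D2 : point d -> point d -> config d -> R),
    (forall i x, is_partial f i x (D1 i x)) /\
    (forall i, cont_in B (D1 i)) /\
    (forall i k x, is_partial (D1 k) i x (D2 i k x)) /\
    (forall i k, cont_in B (D2 i k)).

Definition condA {d} (S : point d -> config d -> R) : Prop :=
  exists r : R, (0 < r)%R /\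
    forall j : point d,
      (forall x y : config d, (forall k, inBall j r k -> x k = y k) -> S j x = S j y) /\
      C2_in (inBall j r) (S j).

Definition condB {d} (S : point d -> config d -> R) : Prop :=
  forall (j k : point d) (l : Z) (x : config d), S j (tau k l x) = S (padd j k) x.

Definition condC {d} (S : point d -> config d -> R) : Prop :=
  forall j : point d,
    (exists m : R, forall x, (m <= S j x)%R) /\
    (forall k : point d, pnorm (psub k j) = 1%Z ->
       forall M : R, exists R0 : R, forall x : config d,
         (R0 < Rabs (x k - x j))%R -> (M < S j x)%R).

Definition condD {d} (S : point d -> config d -> R) : Prop :=
  (forall (j i k : point d) (x : config d) (l : R),
      i <> k -> is_partial2 (S j) i k x l -> (l <= 0)%R) /\
  (forall (i k : point d) (x : config d) (l : R),
      pnorm (psub i k) = 1%Z -> is_partial2 (S i) i k x l -> (l < 0)%R).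

Definition condE {d} (S : point d -> config d -> R) : Prop :=
  exists C : R, forall (i j k : point d) (x : config d) (l : R),
    is_partial2 (S j) i k x l -> (Rabs l <= C)%R.

(* p : columns p_1..p_d of an integer d x d matrix; column l is p l,
   its k-th entry is p l k. *)
Definition lin_indep {d} (p : 'I_d -> point d) : Prop :=
  forall c : 'I_d -> R,
    (forall k : 'I_d, (\big[Rplus/0%R]_(l < d) (c l * IZR (p l k)))%R = 0%R) ->
    forall l, c l = 0%R.

Definition inBp {d} (p : 'I_d -> point d) (j : point d) : Prop :=
  exists t : 'I_d -> R, (forall l, 0 <= t l < 1)%R /\
    forall k : 'I_d, IZR (j k) = (\big[Rplus/0%R]_(l < d) (IZR (p l k) * t l))%R.

Definition inX {d} (p : 'I_d -> point d) (q : 'I_d -> Z) (x : config d) : Prop :=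
  forall l : 'I_d, forall i, tau (p l) (q l) x i = x i.

(* A box [-M, M]^d containing B_p, with M = sum of |entries of p|. *)
Definition boxM {d} (p : 'I_d -> point d) : nat :=
  Z.to_nat (\big[Z.add/0%Z]_(l < d) \big[Z.add/0%Z]_(k < d) Z.abs (p l k))%Z.

Definition boxpt {d} (M : nat) (f : {ffun 'I_d -> 'I_(M.*2.+1)}) : point d :=
  fun k => (Z.of_nat (nat_of_ord (f k)) - Z.of_nat M)%Z.

(* W_{p,q}(x) = sum_{j in B_p} S_j(x), computed as the sum over the box
   [-M,M]^d (which contains B_p) of the indicator of B_p times S_j(x). *)
Definition Wp {d} (p : 'I_d -> point d) (S : point d -> config d -> R) (x : config d) : R :=
  (\big[Rplus/0%R]_(f : {ffun 'I_d -> 'I_((boxM p).*2.+1)})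
     (if excluded_middle_informative (inBp p (boxpt f)) then S (boxpt f) x else 0%R))%R.

(* The action W_{p,q} is continuous for the product topology on R^{Z^d}, so
   it suffices to minimize it over a compact set.  Three observations give one:
   - W_{p,q} and X_{p,q} are invariant under the vertical shift tau_{0,l}, so
     we may normalize configurations to 0 <= x_0 <= 1;
   - on the sublevel set {W_{p,q} <= c} of X_{p,q}, every local energy S_j(x)
     is bounded: by periodicity S_j(x) = S_{j'}(x) for some j' in B_p, and
     S_{j'}(x) is bounded by c minus the lower bounds of the other terms;
   - by the coercivity (C), bounded local energies bound the jumps
     |x_k - x_j| between neighbours, hence, walking from the origin, each
     coordinate x_i of a normalized configuration.
   By Tychonoff's theorem the normalized sublevel set is then compact, and the
   extreme value theorem yields the minimizer.  Linear independence of the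
   p_l enters twice: it makes B_p a fundamental domain of the lattice spanned
   by the p_l, and it provides an affine periodic configuration, so that
   X_{p,q} is not empty. *)

From Pilot Require Import Defs.
From mathcomp Require Import ssreflect ssrfun ssrbool eqtype ssrnat seq choice fintype finfun bigop.
From HB Require Import structures.
From mathcomp Require Import all_order all_algebra.
From mathcomp Require Import all_classical all_reals all_analysis.
From mathcomp Require Import Rstruct Rstruct_topology.
(* Loaded last, so that %Z denotes the integers Z of Defs rather than int. *)
From Stdlib Require Import Reals ZArith ClassicalEpsilon Lra Lia FunctionalExtensionality Classical.

Unset Printing Implicit Defensive.

(* Integer addition as a commutative monoid, to use the bigop lemmas on the
   integer sums of Defs (pnorm, boxM). *)
HB.instance Definition _ := Monoid.isComLaw.Build Z 0%Z Z.add Z.add_assoc Z.add_comm Z.add_0_l.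

Section LatticeNorm.
Context {d : nat}.
Local Notation pt := (Defs.point d).

Definition pzero : pt := fun _ => 0%Z.

Lemma zsum_ge0 (P : pred 'I_d) (F : 'I_d -> Z) :
  (forall m, (0 <= F m)%Z) -> (0 <= \big[Z.add/0%Z]_(m < d | P m) F m)%Z.
Proof. by move=> F_ge0; apply: (big_ind (fun z => (0 <= z)%Z)); [lia | move=> *; lia |]. Qed.

Lemma pnorm_coord (i : pt) m : (Z.abs (i m) <= pnorm i)%Z.
Proof.
rewrite /pnorm (bigD1 m) //=.
apply/Z.le_sub_le_add_l; rewrite Z.sub_diag; apply: zsum_ge0 => j; exact: Z.abs_nonneg.
Qed.

Lemma pnorm_ge0 (i : pt) : (0 <= pnorm i)%Z.
Proof. exact: (@zsum_ge0 xpredT (fun j => Z.abs (i j)) (fun j => Z.abs_nonneg _)). Qed.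

Lemma pnorm_eq0 (i : pt) : pnorm i = 0%Z -> i = pzero.
Proof.
move=> i0; apply: functional_extensionality => m.
have := pnorm_coord i m; have := Z.abs_nonneg (i m); rewrite /pzero; lia.
Qed.

(* Every nonzero lattice point has a neighbour one step closer to the origin:
   decrease the absolute value of one nonzero coordinate by one. *)
Lemma pnorm_step (i : pt) : (0 < pnorm i)%Z ->
  exists i' : pt, pnorm i' = (pnorm i - 1)%Z /\ pnorm (psub i i') = 1%Z.
Proof.
move=> i_pos.
have [m im] : exists m, i m <> 0%Z.
  apply: NNPP => all0; suff : pnorm i = 0%Z by lia.
  rewrite /pnorm big1 // => j _.
  by have -> : i j = 0%Z by apply: NNPP => ij; apply: all0; exists j.
have abs_step : (Z.abs (i m - Z.sgn (i m)) = Z.abs (i m) - 1)%Z.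
  by case: (Z.lt_total (i m) 0) => [h|[h|h]]; [rewrite Z.sgn_neg //; lia | | rewrite Z.sgn_pos //; lia].
have abs_sgn : (Z.abs (Z.sgn (i m)) = 1)%Z.
  by case: (Z.lt_total (i m) 0) => [h|[h|h]]; [rewrite Z.sgn_neg | | rewrite Z.sgn_pos].
exists (fun k => if k == m then (i m - Z.sgn (i m))%Z else i k); split.
- rewrite /pnorm (bigD1 m) //= [in RHS](bigD1 m) //= eqxx abs_step.
  rewrite (eq_bigr (fun j => Z.abs (i j))); last by move=> j /negbTE ->.
  lia.
- rewrite /pnorm /psub (bigD1 m) //= eqxx big1 => [|j /negbTE ->]; last by rewrite Z.sub_diag.
  have -> : (i m - (i m - Z.sgn (i m)) = Z.sgn (i m))%Z by lia.
  lia.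
Qed.

End LatticeNorm.

Section Translations.
Context {d : nat}.
Local Notation pt := (Defs.point d).

Definition popp (k : pt) : pt := fun m => (- k m)%Z.

Lemma padd0 (i : pt) : padd i pzero = i.
Proof. by apply: functional_extensionality => m; rewrite /padd /pzero; lia. Qed.

Lemma tau_comp (k k' : pt) l l' (x : config d) :
  tau k l (tau k' l' x) = tau (padd k k') (l + l') x.
Proof.
apply: functional_extensionality => i; rewrite /tau /padd plus_IZR.
have -> : (fun m => (i m + k m + k' m)%Z) = (fun m => (i m + (k m + k' m))%Z).
  by apply: functional_extensionality => m; lia.
lra.
Qed.

Lemma tau_id (x : config d) : tau pzero 0 x = x.
Proof. by apply: functional_extensionality => i; rewrite /tau padd0 /=; lra. Qed.

Lemma tau_ext (k k' : pt) l x : (forall m, k m = k' m) -> tau k l x = tau k' l x.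
Proof. by move=> kk'; have -> : k = k' by apply: functional_extensionality. Qed.

Section Symmetries.
Variable x : config d.
Definition fixes k l := tau k l x = x.

Lemma fixes_ext {k l k' l'} : (forall m, k m = k' m) -> l = l' -> fixes k l -> fixes k' l'.
Proof. by rewrite /fixes => kk' <-; rewrite (tau_ext _ k' l x kk'). Qed.

Lemma fixes0 : fixes pzero 0.
Proof. exact: tau_id. Qed.

Lemma fixesD {k l k' l'} : fixes k l -> fixes k' l' -> fixes (padd k k') (l + l').
Proof. by rewrite /fixes => fx fx'; rewrite -tau_comp fx' fx. Qed.

Lemma fixesN {k l} : fixes k l -> fixes (popp k) (- l).
Proof.
rewrite /fixes => fx; rewrite -{1}fx tau_comp -{2}(tau_id x).
have -> : (- l + l = 0)%Z by lia.
by apply: tau_ext => m; rewrite /padd /popp /pzero; lia.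
Qed.

Lemma fixesZ k l n : fixes k l -> fixes (fun m => (n * k m)%Z) (n * l).
Proof.
move=> fx.
have fix_nat (a : nat) : fixes (fun m => (Z.of_nat a * k m)%Z) (Z.of_nat a * l).
  elim: a => [|a IH]; first exact: (fixes_ext _ _ fixes0).
  by apply: (fixes_ext _ _ (fixesD IH fx)) => [m|]; rewrite /padd; lia.
case: (Z.le_gt_cases 0 n) => n_sign.
  by have := fix_nat (Z.to_nat n); rewrite Z2Nat.id.
apply: (fixes_ext _ _ (fixesN (fix_nat (Z.to_nat (- n))))) => [m|];
  rewrite /popp Z2Nat.id; lia.
Qed.

Lemma fixes_sum (I : Type) (s : seq I) (K : I -> pt) (L : I -> Z) :
  (forall i, fixes (K i) (L i)) ->
  fixes (fun m => \big[Z.add/0%Z]_(i <- s) K i m) (\big[Z.add/0%Z]_(i <- s) L i).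
Proof.
move=> fxi; elim: s => [|a s IH].
  by apply: (fixes_ext _ _ fixes0) => [m|]; rewrite big_nil.
by apply: (fixes_ext _ _ (fixesD (fxi a) IH)) => [m|]; rewrite big_cons.
Qed.
End Symmetries.

Definition plin (p : 'I_d -> pt) (n : 'I_d -> Z) : pt :=
  fun k => \big[Z.add/0%Z]_(l < d) (n l * p l k)%Z.
Definition qlin (q : 'I_d -> Z) (n : 'I_d -> Z) : Z := \big[Z.add/0%Z]_(l < d) (n l * q l)%Z.

Lemma inX_fixes_lincomb p q x n : inX p q x -> fixes x (plin p n) (qlin q n).
Proof.
move=> xX; rewrite /plin /qlin.
apply: (fixes_sum x _ _ (fun l m => (n l * p l m)%Z) (fun l => (n l * q l)%Z)) => l.
by apply: fixesZ; apply: functional_extensionality => i; exact: xX.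
Qed.

Lemma S_periodic (S : pt -> config d -> R) (hB : condB S) p q x n j :
  inX p q x -> S (padd j (plin p n)) x = S j x.
Proof. by move=> xX; rewrite -(hB j (plin p n) (qlin q n) x) (inX_fixes_lincomb p q x n xX). Qed.

End Translations.

Section LinearAlgebra.
Context {d : nat}.
Variable p : 'I_d -> Defs.point d.
Hypothesis hp : lin_indep p.

Local Open Scope ring_scope.

Definition pmatrix : 'M[R]_d := \matrix_(l, k) IZR (p l k).

Lemma pmatrix_unit : pmatrix \in unitmx.
Proof.
rewrite -row_free_unit -kermx_eq0; apply/eqP/matrixP => i j; rewrite [in RHS]mxE.
apply: (hp (fun l => kermx pmatrix i l)) => k.
have := congr1 (fun M : 'M[R]_d => M i k) (mulmx_ker pmatrix).
rewrite !mxE => ker_ik; apply: etrans ker_ik; apply: eq_bigr => l _; by rewrite [pmatrix l k]mxE.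
Qed.

Lemma solve_row (v : 'I_d -> R) : exists t : 'I_d -> R,
  forall k, \big[Rplus/0%R]_(l < d) (t l * IZR (p l k))%R = v k.
Proof.
exists (fun l => ((\row_k v k) *m invmx pmatrix) 0 l) => k.
have := congr1 (fun M : 'rV[R]_d => M 0 k) (mulmxKV pmatrix_unit (\row_k v k)).
rewrite !mxE => sol; apply: etrans sol; apply: eq_bigr => l _; by rewrite !mxE.
Qed.

Lemma solve_col (w : 'I_d -> R) : exists a : 'I_d -> R,
  forall l, \big[Rplus/0%R]_(k < d) (IZR (p l k) * a k)%R = w l.
Proof.
exists (fun k => (invmx pmatrix *m (\col_l w l)) k 0) => l.
have := congr1 (fun M : 'cV[R]_d => M l 0) (mulKVmx pmatrix_unit (\col_l w l)).
rewrite !mxE => sol; apply: etrans sol; apply: eq_bigr => k _; by rewrite !mxE.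
Qed.

End LinearAlgebra.

Section FundamentalDomain.
Context {d : nat}.
Local Notation pt := (Defs.point d).

Lemma box_cover N (v : pt) : (forall m, (Z.abs (v m) <= Z.of_nat N)%Z) ->
  exists f : {ffun 'I_d -> 'I_(N.*2.+1)}, boxpt f = v.
Proof.
move=> v_in; exists [ffun m => inord (Z.to_nat (v m + Z.of_nat N))].
apply: functional_extensionality => m; have vm := v_in m.
rewrite /boxpt ffunE inordK; first by rewrite Z2Nat.id; lia.
by rewrite ltnS -addnn -plusE; apply/leP; lia.
Qed.

Lemma IZR_zsum (I : Type) (s : seq I) (F : I -> Z) :
  IZR (\big[Z.add/0%Z]_(i <- s) F i) = \big[Rplus/0%R]_(i <- s) IZR (F i).
Proof. exact: (big_morph IZR plus_IZR). Qed.

Lemma Rsum_sub (I : Type) (s : seq I) (F G : I -> R) :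
  \big[Rplus/0%R]_(i <- s) (F i - G i)%R =
  (\big[Rplus/0%R]_(i <- s) F i - \big[Rplus/0%R]_(i <- s) G i)%R.
Proof. by apply: (big_rec3 (fun a b c => a = b - c)%R) => [|i a b c _ ->]; lra. Qed.

(* B_p lies in the cube [-boxM p, boxM p]^d, so the sum defining Wp really
   runs over all of B_p. *)
Lemma Bp_in_box (p : 'I_d -> pt) j : inBp p j -> forall k, (Z.abs (j k) <= Z.of_nat (boxM p))%Z.
Proof.
case=> t [t_unit j_eq] k.
have col_bound : (Rabs (IZR (j k)) <= IZR (\big[Z.add/0%Z]_(l < d) Z.abs (p l k)))%R.
  rewrite j_eq IZR_zsum.
  apply: (big_ind2 (fun a b => Rabs a <= b)%R) => [|a b a' b' h h'|l _].
  - by rewrite Rabs_R0; lra.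
  - by have := Rabs_triang a a'; lra.
  - rewrite Rabs_mult -abs_IZR (Rabs_pos_eq (t l)); last by have := t_unit l; lra.
    by have := t_unit l; have := IZR_le _ _ (Z.abs_nonneg (p l k)); nra.
have col_le_box : (\big[Z.add/0%Z]_(l < d) Z.abs (p l k) <= Z.of_nat (boxM p))%Z.
  rewrite /boxM Z2Nat.id; last by apply: (big_ind (fun z => (0 <= z)%Z)) => [||l _];
    [lia | move=> *; lia | exact: pnorm_ge0].
  apply: (big_ind2 (fun a b => (a <= b)%Z)) => [||l _]; [lia | move=> *; lia | exact: pnorm_coord].
rewrite -abs_IZR in col_bound; have := le_IZR _ _ col_bound; lia.
Qed.

(* B_p is a fundamental domain: every lattice point is congruent to a point of
   B_p modulo the lattice spanned by the p_l (take integer parts of the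
   coordinates in the basis p). *)
Lemma fundamental_domain (p : 'I_d -> pt) : lin_indep p -> forall j : pt,
  exists n : 'I_d -> Z, inBp p (psub j (plin p n)).
Proof.
move=> hp j; have [t t_eq] := solve_row p hp (fun k => IZR (j k)).
exists (fun l => (up (t l) - 1)%Z), (fun l => t l - IZR (up (t l) - 1))%R; split.
  by move=> l; have := archimed (t l); rewrite minus_IZR; lra.
move=> k; rewrite /psub /plin minus_IZR IZR_zsum -t_eq -Rsum_sub.
by apply: eq_bigr => l _; rewrite mult_IZR; lra.
Qed.

End FundamentalDomain.

Lemma term_le_of_sum_le (I : finType) (F lb : I -> R) (c : R) (i0 : I) :
  (forall i, (lb i <= F i)%R) -> (\big[Rplus/0%R]_i F i <= c)%R ->
  (F i0 <= c + \big[Rplus/0%R]_i Rabs (lb i))%R.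
Proof.
move=> F_lb; rewrite (bigD1 i0) //= (bigD1 i0 (F := fun i => Rabs (lb i))) //=.
have others : (- (\big[Rplus/0%R]_(i | i != i0) Rabs (lb i)) <= \big[Rplus/0%R]_(i | i != i0) F i)%R.
  apply: (big_ind2 (fun a b => - a <= b)%R) => [|*|i _]; [lra | lra |].
  by have := F_lb i; have := Rle_abs (- lb i); rewrite Rabs_Ropp; lra.
by have := Rabs_pos (lb i0); lra.
Qed.

Section SublevelBounds.
Context {d : nat}.
Local Notation pt := (Defs.point d).
Variable S : pt -> config d -> R.
Hypothesis hB : condB S.
Hypothesis hC : condC S.
Variables (p : 'I_d -> pt) (q : 'I_d -> Z).
Hypothesis hp : lin_indep p.

Local Notation box := {ffun 'I_d -> 'I_((boxM p).*2.+1)}.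

Definition Wterm (f : box) (x : config d) : R :=
  if excluded_middle_informative (inBp p (boxpt f)) then S (boxpt f) x else 0%R.

Lemma Wp_Wterm x : Wp p S x = \big[Rplus/0%R]_(f : box) Wterm f x.
Proof. by []. Qed.

Definition admissible (c : R) (x : config d) : Prop :=
  inX p q x /\ (Wp p S x <= c)%R /\ (0 <= x pzero <= 1)%R.

Lemma sublevel_local_bound c : exists C, forall x, inX p q x -> (Wp p S x <= c)%R ->
  forall j, (S j x <= C)%R.
Proof.
have [m m_le] : exists m : pt -> R, forall j x, (m j <= S j x)%R.
  apply: (ClassicalEpsilon.choice (fun j mj => forall x, (mj <= S j x)%R)) => j.
  by case: (hC j).
pose lb (f : box) := if excluded_middle_informative (inBp p (boxpt f)) then m (boxpt f) else 0%R.
have lb_le f x : (lb f <= Wterm f x)%R.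
  by rewrite /lb /Wterm; case: excluded_middle_informative => h /=; [exact: m_le | lra].
exists (c + \big[Rplus/0%R]_(f : box) Rabs (lb f))%R => x xX xW j.
have [n j'_in] := fundamental_domain p hp j.
set j' := psub j (plin p n) in j'_in.
have -> : j = padd j' (plin p n).
  by apply: functional_extensionality => k; rewrite /j' /padd /psub; lia.
rewrite (S_periodic S hB p q x n j' xX).
have [f0 f0_eq] := box_cover (boxM p) j' (Bp_in_box p j' j'_in).
have <- : Wterm f0 x = S j' x.
  rewrite /Wterm; case: excluded_middle_informative => [_ | not_in] /=; first by rewrite f0_eq.
  by case: not_in; rewrite f0_eq.
exact: (term_le_of_sum_le _ (fun f => Wterm f x) lb c f0 (fun f => lb_le f x) xW).
Qed.

(* Admissible configurations are bounded coordinatewise: by (C), bounded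
   local energies bound |x_i - x_i'| for neighbours, and we induct on the
   distance of i to the origin. *)
Lemma admissible_coord_bound c (i : pt) : exists B, forall x, admissible c x -> (Rabs (x i) <= B)%R.
Proof.
have [C S_le] := sublevel_local_bound c.
suff by_norm (n : nat) : forall i : pt, pnorm i = Z.of_nat n ->
    exists B, forall x, admissible c x -> (Rabs (x i) <= B)%R.
  by apply: (by_norm (Z.to_nat (pnorm i))); rewrite Z2Nat.id //; apply: pnorm_ge0.
elim: n => [|n IH] {}i i_norm.
  by rewrite (pnorm_eq0 _ i_norm); exists 1%R => x [_ [_ x0]]; rewrite Rabs_pos_eq; lra.
have [i' [i'_norm i'_nb]] := pnorm_step i (ltac:(lia)).
have [B' x_i'] := IH i' (ltac:(lia)).
have [R0 coercive] := (hC i').2 i i'_nb C.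
exists (B' + R0)%R => x xa; have := x_i' x xa; case: xa => [xX [xW _]].
have jump : (Rabs (x i - x i') <= R0)%R.
  by apply: Rnot_lt_le => big; have := coercive x big; have := S_le x xX xW i'; lra.
have -> : x i = ((x i - x i') + x i')%R by ring.
by have := Rabs_triang (x i - x i') (x i'); lra.
Qed.

End SublevelBounds.

Module ProductTopology.
Import GRing.Theory Num.Theory.
Import numFieldNormedType.Exports.

Section ProductTopology.
Local Open Scope classical_set_scope.
Local Open Scope ring_scope.
Variables (K : realType) (I : eqType).
Local Notation CT := (prod_topology (fun _ : I => K)).

Lemma near_coords (x : CT) (L : seq I) (delta : K) : 0 < delta ->
  \forall y \near x, forall k, k \in L -> `|y k - x k| < delta.
Proof.
move=> delta_pos; elim: L => [|k L IH].
  by apply: (nearW (nbhs_filter x)) => y k; rewrite in_nil.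
have near_k : \forall y \near x, `|y k - x k| < delta.
  have proj_k : (fun y : CT => y k) @ x --> x k := @proj_continuous I (fun _ => K) k x.
  have := iffLR (@cvgrPdist_lt _ _ _ _ (nbhs_filter x) (fun y : CT => y k) (x k)) proj_k delta delta_pos.
  by apply: (@filterS _ _ (nbhs_filter x)) => y; rewrite distrC.
apply: (filterS2 (nbhs_filter x) _ near_k IH) => y yk yL k'.
by rewrite in_cons => /orP [/eqP -> //|]; exact: yL.
Qed.

Lemma continuous_of_local (f : CT -> K) (L : seq I) :
  (forall x eps, 0 < eps -> exists2 delta, 0 < delta &
     forall y, (forall k, k \in L -> `|y k - x k| < delta) -> `|f y - f x| < eps) ->
  continuous f.
Proof.
move=> f_loc x; apply/(@cvgrPdist_lt _ _ _ _ (nbhs_filter x)) => eps eps_pos.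
have [delta delta_pos f_close] := f_loc x eps eps_pos.
near=> y; rewrite distrC; apply: f_close; near: y; exact: near_coords.
Unshelve. all: by end_near.
Qed.

Lemma continuous_sum (J : Type) (s : seq J) (F : J -> CT -> K) :
  (forall j, continuous (F j)) -> continuous (fun x : CT => \sum_(j <- s) F j x).
Proof.
move=> F_cont; elim: s => [|a s IH].
  have -> : (fun x : CT => \sum_(j <- [::]) F j x) = (fun _ => 0) by apply: funext => x; rewrite big_nil.
  exact: cst_continuous.
have -> : (fun x : CT => \sum_(j <- a :: s) F j x) = (F a + (fun x => \sum_(j <- s) F j x)).
  by apply: funext => x; rewrite big_cons.
by move=> x; apply: continuousD; [exact: F_cont | exact: IH].
Qed.

Lemma closed_coord_relations (T : Type) (a b : T -> I) (c : T -> K) :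
  closed [set x : CT | forall t, x (a t) + c t = x (b t)].
Proof.
have -> : [set x : CT | forall t, x (a t) + c t = x (b t)] =
          \bigcap_(t in setT) ((fun x : CT => x (a t) + c t - x (b t)) @^-1` [set 0]).
  apply/seteqP; split => x /=; first by move=> h t _ /=; rewrite h subrr.
  by move=> h t; have /= /eqP := h t Logic.I; rewrite subr_eq0 => /eqP.
apply: closed_bigI => t _.
have rel_cont : continuous ((fun x : CT => x (a t)) + (fun _ => c t) - (fun x : CT => x (b t))).
  move=> x; apply: continuousB; last exact: proj_continuous.
  by apply: continuousD; [exact: proj_continuous | exact: cst_continuous].
by move/continuous_closedP : rel_cont; apply; exact: closed_eq.
Qed.

Lemma closed_sublevel (W : CT -> K) (c : K) : continuous W -> closed [set x : CT | W x <= c].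
Proof. by move/continuous_closedP => W_closed; apply: (W_closed [set y | y <= c]); exact: closed_le. Qed.

Lemma closed_coord_itv (a : I) (lo hi : K) : closed [set x : CT | lo <= x a <= hi].
Proof.
have proj_a : continuous (fun x : CT => x a) by move=> x; exact: proj_continuous.
have -> : [set x : CT | lo <= x a <= hi] = (fun x : CT => x a) @^-1` `[lo, hi].
  by apply/seteqP; split => x /=; rewrite in_itv.
by move/continuous_closedP : proj_a; apply; exact: interval_closed.
Qed.

(* A continuous function attains its minimum on a nonempty closed set whose
   coordinates are bounded (the set is compact by Tychonoff). *)
Lemma min_on_bounded_closed (W : CT -> K) (C : set CT) (B : I -> K) (x0 : CT) :
  continuous W -> closed C -> (forall x, C x -> forall i, `|x i| <= B i) -> C x0 ->
  exists2 xm, C xm & forall y, C y -> W xm <= W y.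
Proof.
move=> W_cont C_closed C_bounded Cx0.
have box_compact : compact.compact [set x : CT | forall i, `[- B i, B i]%classic (x i)].
  exact: (@tychonoff I (fun _ => K) (fun i => `[- B i, B i]%classic)
           (fun i => @segment_compact K (- B i) (B i))).
have C_in_box : C = [set x : CT | forall i, `[- B i, B i]%classic (x i)] `&` C.
  apply/seteqP; split => x; last by case.
  by move=> Cx; split => // i /=; rewrite in_itv /= -ler_norml; exact: C_bounded.
have C_compact : compact.compact C by rewrite C_in_box; apply: compact_closedI.
have [xm Cxm xm_min] := compact_EVT_min (ex_intro _ x0 Cx0) C_compact (continuous_subspaceT W_cont).
by exists xm => [|y Cy]; [move: Cxm; rewrite inE | apply: xm_min; rewrite inE].
Qed.

End ProductTopology.
End ProductTopology.
Import ProductTopology.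

(* Decidable equality on lattice points, so that finite sets of lattice points
   can be given as lists. *)
Lemma pt_eqP (d : nat) : Equality.axiom (@pt_eqb d).
Proof.
move=> i k; apply: (iffP forallP) => [ik|->]; last by move=> m; apply/Z.eqb_spec.
by apply: functional_extensionality => m; exact/Z.eqb_spec.
Qed.

HB.instance Definition _ (d : nat) := hasDecEq.Build (Defs.point d) (@pt_eqP d).

Section Action.
Context {d : nat}.
Local Notation pt := (Defs.point d).
Local Notation CT := (prod_topology (fun _ : Defs.point d => R)).

Lemma ball_finite (j : pt) (r : R) : (0 < r)%R ->
  exists L : seq pt, forall k, inBall j r k -> k \in L.
Proof.
move=> r_pos; set N := Z.to_nat (up r).
have [up_gt up_le] := archimed r.
exists [seq padd (boxpt f) j | f <- enum {ffun 'I_d -> 'I_(N.*2.+1)}] => k k_in.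
have [f f_eq] : exists f : {ffun 'I_d -> 'I_(N.*2.+1)}, boxpt f = psub k j.
  apply: box_cover => m; have := pnorm_coord (psub k j) m.
  move: k_in; rewrite /inBall => k_in coord_le.
  have : (IZR (Z.abs (psub k j m)) < IZR (up r))%R by have := IZR_le _ _ coord_le; lra.
  by move/lt_IZR; rewrite /N; lia.
apply/mapP; exists f; first by rewrite mem_enum.
by rewrite f_eq; apply: functional_extensionality => m; rewrite /padd /psub; lia.
Qed.

Lemma S_continuous (S : pt -> config d -> R) (hA : condA S) (j : pt) :
  continuous (S j : CT -> R).
Proof.
have [r [r_pos S_loc]] := hA.
have [_ [S_cont _]] := S_loc j.
have [L L_ball] := ball_finite j r r_pos.
apply: (@continuous_of_local R _ _ L) => x eps /RltP eps_pos.
have [delta [delta_pos S_close]] := S_cont x eps eps_pos.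
exists delta => [|y y_close]; first exact/RltP.
by apply/RltP; apply: S_close => k k_in; apply/RltP; exact: y_close k (L_ball k k_in).
Qed.

Lemma W_continuous (S : pt -> config d -> R) (hA : condA S) (p : 'I_d -> pt) :
  continuous (Wp p S : CT -> R).
Proof.
have term_cont f : continuous (Wterm S p f : CT -> R).
  rewrite /Wterm; case: excluded_middle_informative => h /=; [exact: S_continuous | exact: cst_continuous].
exact: (@continuous_sum R _ _ (index_enum {ffun 'I_d -> 'I_((boxM p).*2.+1)}) (Wterm S p) term_cont).
Qed.

(* The affine configuration x_i = - <i, a>, with <p_l, a> = q_l, is periodic. *)
Lemma periodic_config_exists (p : 'I_d -> pt) (q : 'I_d -> Z) :
  lin_indep p -> exists x : config d, inX p q x.
Proof.
move=> hp; have [a a_eq] := solve_col p hp (fun l => IZR (q l)).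
exists (fun i => - \big[Rplus/0%R]_(k < d) (IZR (i k) * a k))%R => l i.
rewrite /tau /padd -(a_eq l).
have -> : \big[Rplus/0%R]_(k < d) (IZR (i k + p l k) * a k)%R =
          (\big[Rplus/0%R]_(k < d) (IZR (i k) * a k) + \big[Rplus/0%R]_(k < d) (IZR (p l k) * a k))%R.
  by rewrite -big_split /=; apply: eq_bigr => k _; rewrite plus_IZR; ring.
ring.
Qed.

(* Vertical shift by an integer bringing x_0 into [0,1). *)
Definition normalize (y : config d) : config d := tau pzero (1 - up (y pzero)) y.

Lemma normalize_val (y : config d) i : normalize y i = (y i + IZR (1 - up (y pzero)))%R.
Proof. by rewrite /normalize /tau padd0. Qed.

Lemma normalize_inX p q y : inX p q y -> inX p q (normalize y).
Proof. by move=> yX l i; have := yX l i; rewrite /tau !normalize_val; lra. Qed.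

Lemma normalize_origin y : (0 <= normalize y pzero < 1)%R.
Proof. by rewrite normalize_val minus_IZR; have := archimed (y pzero); lra. Qed.

Lemma normalize_W (S : pt -> config d -> R) (hB : condB S) p y : Wp p S (normalize y) = Wp p S y.
Proof.
rewrite !Wp_Wterm; apply: eq_bigr => f _; rewrite /Wterm.
by case: excluded_middle_informative => h /=//; rewrite /normalize hB padd0.
Qed.

Lemma normalize_admissible (S : pt -> config d -> R) (hB : condB S) p q c y :
  inX p q y -> (Wp p S y <= c)%R -> admissible S p q c (normalize y).
Proof.
move=> yX yW; split; first exact: normalize_inX.
by rewrite (normalize_W S hB); split => //; have := normalize_origin y; lra.
Qed.

Lemma admissible_closed (S : pt -> config d -> R) (hA : condA S) p q c :
  closed (admissible S p q c : set CT).
Proof.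
have -> : (admissible S p q c : set CT) =
    ([set x : CT | forall t : 'I_d * pt, (x (padd t.2 (p t.1)) + IZR (q t.1))%R = x t.2]
     `&` [set x : CT | Order.le (Wp p S x) c]
     `&` [set x : CT | Order.le (0:R) (x pzero) && Order.le (x pzero) (1:R)])%classic.
  apply/seteqP; split => x /=.
    case=> [xX [/RleP xW [/RleP x0 /RleP x1]]]; split; [split|] => //; last by apply/andP.
    by case=> l i; exact: xX.
  case=> [[xX /RleP xW] /andP [/RleP x0 /RleP x1]]; do !split => //.
  by move=> l i; exact: (xX (l, i)).
apply: closedI; [apply: closedI|].
- exact: closed_coord_relations.
- exact: closed_sublevel (W_continuous S hA p).
- exact: closed_coord_itv.
Qed.

End Action.

Theorem mainTheorem3 (d : nat) (S : Defs.point d -> config d -> R)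
  (hA : condA S) (hB : condB S) (hC : condC S) (hD : condD S) (hE : condE S)
  (p : 'I_d -> Defs.point d) (q : 'I_d -> Z) (hp : lin_indep p) :
  exists x : config d, inX p q x /\
    forall y : config d, inX p q y -> (Wp p S x <= Wp p S y)%R.
Proof.
have [x0 x0X] := periodic_config_exists p q hp.
pose c := Wp p S x0.
have [B coord_le] : exists B : Defs.point d -> R,
    forall i x, admissible S p q c x -> (Rabs (x i) <= B i)%R.
  apply: (ClassicalEpsilon.choice (fun i Bi => forall x, admissible S p q c x -> (Rabs (x i) <= Bi)%R)) => i.
  exact: admissible_coord_bound.
have [xm [xmX [xmW _]] xm_min] := @min_on_bounded_closed R _ (Wp p S) _ B _
  (W_continuous S hA p) (admissible_closed S hA p q c)
  (fun x xa i => introT RleP (coord_le i x xa))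
  (normalize_admissible S hB p q c x0 x0X (Rle_refl c)).
exists xm; split => // y yX.
case: (Rle_lt_dec (Wp p S y) c) => [yW | yW]; last lra.
rewrite -(normalize_W S hB p y); apply/RleP; apply: xm_min.
exact: normalize_admissible.
Qed.
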